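(* Let $\mathcal{L}=(\mathrm{Fm},\vdash)$ be a logic. 1. If properties $\wedge_P$, $\vee_P$ and $\neg_W$ hold for $\mathcal{L}$, then $\neg\varphi\vee\neg\psi\vdash\neg(\varphi\wedge\psi)$ for all $\varphi,\psi\in\mathrm{Fm}$. 2. If in addition property $\neg_{Il}$ holds for $\mathcal{L}$, then $\neg(\varphi\wedge\psi)\vdash\neg\varphi\vee\neg\psi$ for all $\varphi,\psi\in\mathrm{Fm}$.
   Context: A logic is a pair $\mathcal{L}=(\mathrm{Fm},\vdash)$ where $\mathrm{Fm}$ is the term (formula) algebra in some signature over a set of propositional variables and $\vdash\subseteq\mathcal{P}(\mathrm{Fm})\times\mathrm{Fm}$ is a consequence relation: (a) $\varphi\in\Gamma$ implies $\Gamma\vdash\varphi$; (b) $\Gamma\vdash\varphi$ and $\Gamma\subseteq\Delta$ imply $\Delta\vdash\varphi$; (c) if $\Delta\vdash\varphi$ and $\Gamma\vdash\psi$ for all $\psi\in\Delta$, then $\Gamma\vdash\varphi$. Write $Cn(\Gamma)=\{\psi\mid\Gamma\vdash\psi\}$, $Cn(\varphi)=Cn(\{\varphi\})$, $Cn(\Gamma,\varphi)=Cn(\Gamma\cup\{\varphi\})$, and $\varphi\vdash\psi$ for $\{\varphi\}\vdash\psi$. Property $\wedge_P$: there is a binary term $x\wedge y$ with $Cn(\varphi\wedge\psi)=Cn(\{\varphi,\psi\})$ for all $\varphi,\psi$. Property $\vee_P$: there is a binary term $x\vee y$ with $Cn(\varphi\vee\psi)=Cn(\varphi)\cap Cn(\psi)$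 for all $\varphi,\psi$. Property $\neg_W$: there is a unary term $\neg x$ such that $\psi\in Cn(\varphi)$ implies $\neg\varphi\in Cn(\neg\psi)$ for all $\varphi,\psi$. For a logic with $\neg_W$ (for the term $\neg$), property $\neg_{Il}$: $Cn(\varphi)\subseteq Cn(\neg\neg\varphi)$ for all $\varphi$. *)

Set Implicit Arguments.

Inductive term (Op : Type) (ar : Op -> nat) (X : Type) : Type :=
| tvar : X -> term ar X
| tapp : forall o : Op, ({i : nat | i < ar o} -> term ar X) -> term ar X.

Arguments tvar {Op ar X} _.
Arguments tapp {Op ar X} _ _.

Fixpoint tsubst (Op : Type) (ar : Op -> nat) (X Y : Type)
  (s : X -> term ar Y) (t : term ar X) : term ar Y :=
  match t with
  | tvar x => s x
  | tapp o args => tapp o (fun i => tsubst s (args i))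
  end.

(* A binary term x /\ y is a term in two variables (true = x, false = y);
   its induced operation on formulas. *)
Definition binop (Op : Type) (ar : Op -> nat) (V : Type)
  (t : term ar bool) (a b : term ar V) : term ar V :=
  tsubst (fun v : bool => if v then a else b) t.

Definition unop (Op : Type) (ar : Op -> nat) (V : Type)
  (t : term ar unit) (a : term ar V) : term ar V :=
  tsubst (fun _ : unit => a) t.

Definition is_consequence (Fm : Type) (vd : (Fm -> Prop) -> Fm -> Prop) : Prop :=
  (forall (G : Fm -> Prop) phi, G phi -> vd G phi) /\
  (forall (G D : Fm -> Prop) phi, vd G phi -> (forall x, G x -> D x) -> vd D phi) /\
  (forall (G D : Fm -> Prop) phi,
      vd D phi -> (forall psi, D psi -> vd G psi) -> vd G phi).

Definition single (Fm : Type) (a : Fm) : Fm -> Prop := fun x => x = a.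
Definition pair (Fm : Type) (a b : Fm) : Fm -> Prop := fun x => x = a \/ x = b.

(* Cn(phi) = Cn({a,b}) etc., stated extensionally. *)
Definition conjP (Fm : Type) (vd : (Fm -> Prop) -> Fm -> Prop)
  (c : Fm -> Fm -> Fm) : Prop :=
  forall a b psi, vd (single (c a b)) psi <-> vd (pair a b) psi.

Definition disjP (Fm : Type) (vd : (Fm -> Prop) -> Fm -> Prop)
  (d : Fm -> Fm -> Fm) : Prop :=
  forall a b psi, vd (single (d a b)) psi <-> (vd (single a) psi /\ vd (single b) psi).

Definition negW (Fm : Type) (vd : (Fm -> Prop) -> Fm -> Prop)
  (n : Fm -> Fm) : Prop :=
  forall a b, vd (single a) b -> vd (single (n b)) (n a).

Definition negIl (Fm : Type) (vd : (Fm -> Prop) -> Fm -> Prop)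
  (n : Fm -> Fm) : Prop :=
  forall a psi, vd (single a) psi -> vd (single (n (n a))) psi.


Set Implicit Arguments.

(* Half 1: each negated conjunct entails the negated conjunction, by antitonicity of
   negation applied to the conjunction eliminations, so the disjunction does too.
   Half 2: with [~~a |- a], negation becomes contrapositive ([~a |- b] gives
   [~b |- a]); contraposing the disjunction introductions gives
   [~(~a \/ ~b) |- a /\ b], and contraposing once more yields the claim. *)

Section SingleConsequence.

Variables (Fm : Type) (vd : (Fm -> Prop) -> Fm -> Prop).
Hypothesis Hcons : is_consequence vd.

Lemma cn_refl (a : Fm) : vd (single a) a.
Proof. destruct Hcons as [Hrefl _]. apply Hrefl. reflexivity. Qed.

Lemma cn_trans (a b e : Fm) :
  vd (single a) b -> vd (single b) e -> vd (single a) e.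
Proof.
  destruct Hcons as [_ [_ Hcut]]. intros Hab Hbe.
  apply (Hcut _ (single b)); [exact Hbe |].
  intros x Hx. unfold single in Hx. subst x. exact Hab.
Qed.

Lemma cn_cut_pair (x a b e : Fm) :
  vd (pair a b) e -> vd (single x) a -> vd (single x) b -> vd (single x) e.
Proof.
  destruct Hcons as [_ [_ Hcut]]. intros Hpair Ha Hb.
  apply (Hcut _ (pair a b)); [exact Hpair |].
  intros y [-> | ->]; assumption.
Qed.

Section Connectives.

Variables (c d : Fm -> Fm -> Fm) (n : Fm -> Fm).
Hypotheses (HandP : conjP vd c) (HorP : disjP vd d) (HnegW : negW vd n).

Lemma conjP_elim_l (a b : Fm) : vd (single (c a b)) a.
Proof.
  destruct Hcons as [Hrefl _]. apply HandP. apply Hrefl. left. reflexivity.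
Qed.

Lemma conjP_elim_r (a b : Fm) : vd (single (c a b)) b.
Proof.
  destruct Hcons as [Hrefl _]. apply HandP. apply Hrefl. right. reflexivity.
Qed.

Lemma conjP_intro (x a b : Fm) :
  vd (single x) a -> vd (single x) b -> vd (single x) (c a b).
Proof. apply cn_cut_pair. apply HandP. apply cn_refl. Qed.

Lemma disjP_intro_l (a b : Fm) : vd (single a) (d a b).
Proof. exact (proj1 (proj1 (HorP a b (d a b)) (cn_refl _))). Qed.

Lemma disjP_intro_r (a b : Fm) : vd (single b) (d a b).
Proof. exact (proj2 (proj1 (HorP a b (d a b)) (cn_refl _))). Qed.

Lemma disjP_elim (a b e : Fm) :
  vd (single a) e -> vd (single b) e -> vd (single (d a b)) e.
Proof. intros Ha Hb. apply HorP. split; assumption. Qed.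

Lemma negIl_contra (a b : Fm) :
  negIl vd n -> vd (single (n a)) b -> vd (single (n b)) a.
Proof.
  intros HIl Hab. apply cn_trans with (n (n a)).
  - apply HnegW. exact Hab.
  - apply HIl. apply cn_refl.
Qed.

Lemma neg_disj_entails_neg_conj (a b : Fm) :
  vd (single (d (n a) (n b))) (n (c a b)).
Proof.
  apply disjP_elim; apply HnegW; [apply conjP_elim_l | apply conjP_elim_r].
Qed.

Lemma neg_conj_entails_neg_disj (a b : Fm) :
  negIl vd n -> vd (single (n (c a b))) (d (n a) (n b)).
Proof.
  intros HIl. apply negIl_contra; [exact HIl |].
  apply conjP_intro; apply negIl_contra; try exact HIl.
  - apply disjP_intro_l.
  - apply disjP_intro_r.
Qed.

End Connectives.

End SingleConsequence.

Theorem lemma2p1 (Op : Type) (ar : Op -> nat) (Var : Type)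
  (vd : (term ar Var -> Prop) -> term ar Var -> Prop)
  (Hcons : is_consequence vd)
  (tand tor : term ar bool) (tneg : term ar unit)
  (HandP : conjP vd (binop tand))
  (HorP : disjP vd (binop tor))
  (HnegW : negW vd (unop tneg)) :
  (forall phi psi : term ar Var,
     vd (single (binop tor (unop tneg phi) (unop tneg psi)))
        (unop tneg (binop tand phi psi))) /\
  (negIl vd (unop tneg) ->
   forall phi psi : term ar Var,
     vd (single (unop tneg (binop tand phi psi)))
        (binop tor (unop tneg phi) (unop tneg psi))).
Proof.
  split.
  - intros phi psi. exact (neg_disj_entails_neg_conj Hcons HandP HorP HnegW phi psi).
  - intros HIl phi psi. exact (neg_conj_entails_neg_disj Hcons HandP HorP HnegW phi psi HIl).
Qed.
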